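(* There exist a proper $r\in[0,1]$ and a sequence $x\in\mathsf{MLR}_{\mu_r}$ such that $x$ is continuously proper but $r$ is not continuously proper.
   Context: For $p\in[0,1]$ the Bernoulli measure $\mu_p$ on $2^\omega$ is determined by $\mu_p(\llbracket\sigma\rrbracket)=p^{\#_0(\sigma)}(1-p)^{\#_1(\sigma)}$, where $\#_i(\sigma)$ is the number of occurrences of $i$ in $\sigma$. A real $p\in[0,1]$ is identified with its binary expansion in $2^\omega$, and measures on $[0,1]$ with measures on $2^\omega$. $\mathsf{MLR}_{\mu_p}$ is the set of sequences Martin-Löf random for $\mu_p$ relative to the oracle $p$. A sequence/real is proper if it is Martin-Löf random with respect to some computable measure, and continuously proper if it is Martin-Löf random with respect to some computable measure $\mu$ with $\mu(\{z\})=0$ for all $z$. *)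

From Stdlib Require Import Reals List Arith.
Import ListNotations.
Open Scope R_scope.

Inductive code : Type :=
| CZero
| CSucc
| CProj (i : nat)
| COracle
| CComp (f : code) (gs : list code)
| CPrec (f g : code)
| CMu (f : code).

Inductive eval (O : nat -> nat) : code -> list nat -> nat -> Prop :=
| e_zero args : eval O CZero args 0
| e_succ args : eval O CSucc args (S (hd 0%nat args))
| e_proj i args : eval O (CProj i) args (nth i args 0%nat)
| e_oracle args : eval O COracle args (O (hd 0%nat args))
| e_comp f gs args ys y :
    evals O gs args ys -> eval O f ys y -> eval O (CComp f gs) args y
| e_prec0 f g args y :
    eval O f args y -> eval O (CPrec f g) (0%nat :: args) y
| e_precS f g n args z y :
    eval O (CPrec f g) (n :: args) z -> eval O g (n :: z :: args) y ->
    eval O (CPrec f g) (S n :: args) y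
| e_mu f args y :
    eval O f (y :: args) 0%nat ->
    (forall z, (z < y)%nat -> exists v, v <> 0%nat /\ eval O f (z :: args) v) ->
    eval O (CMu f) args y
with evals (O : nat -> nat) : list code -> list nat -> list nat -> Prop :=
| es_nil args : evals O [] args []
| es_cons g gs args y ys :
    eval O g args y -> evals O gs args ys -> evals O (g :: gs) args (y :: ys).

(** The empty oracle (unrelativised computation). *)
Definition O0 : nat -> nat := fun _ => 0%nat.

Definition oracle_of (b : nat -> bool) : nat -> nat :=
  fun n => if b n then 1%nat else 0%nat.

(** Bijective coding of binary strings by naturals. *)
Fixpoint str_code (s : list bool) : nat :=
  match s with
  | [] => 0%nat
  | b :: s' => S (2 * str_code s' + (if b then 1 else 0))%nat
  end.

Definition npair (a b : nat) : nat := ((a + b) * (a + b + 1) / 2 + b)%nat.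

Definition zdec (a : nat) : Z :=
  if Nat.even a then Z.of_nat (a / 2) else (- Z.of_nat ((a + 1) / 2))%Z.

(** The rational coded by [npair a b] is [zdec a / (b+1)]. *)
Definition rat_val (a b : nat) : R := IZR (zdec a) / INR (S b).

Definition extends (x : nat -> bool) (s : list bool) : Prop :=
  forall i, (i < length s)%nat -> x i = nth i s false.

Definition is_prefix (s t : list bool) : Prop := exists u, t = s ++ u.

Definition init_seg (x : nat -> bool) (n : nat) : list bool := map x (seq 0 n).

(** A (Borel probability) measure on 2^omega, given by its values on cylinders. *)
Definition is_measure (m : list bool -> R) : Prop :=
  m [] = 1 /\ (forall s, 0 <= m s) /\
  (forall s, m s = m (s ++ [false]) + m (s ++ [true])).

Fixpoint count_b (c : bool) (s : list bool) : nat :=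
  match s with
  | [] => 0%nat
  | b :: s' => if Bool.eqb b c then S (count_b c s') else count_b c s'
  end.

Definition bernoulli (p : R) (s : list bool) : R :=
  p ^ count_b false s * (1 - p) ^ count_b true s.

Fixpoint sumR (l : list R) : R :=
  match l with [] => 0 | a :: l' => a + sumR l' end.

(** m([[W]]) <= c, where [[W]] is the open set generated by the set of strings W
    (measure of [[W]] = sup over n of the mass of length-n strings extending
    some element of W). *)
Definition open_meas_le (m : list bool -> R) (W : list bool -> Prop) (c : R) : Prop :=
  forall (n : nat) (L : list (list bool)),
    NoDup L ->
    (forall t, In t L -> length t = n /\ exists s, W s /\ is_prefix s t) ->
    sumR (map m L) <= c.

Definition atomless (m : list bool -> R) : Prop :=
  forall (z : nat -> bool) (eps : R), eps > 0 ->
    exists n, m (init_seg z n) < eps.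

(** Computable measure: sigma |-> m([sigma]) is uniformly computable
    (rational 2^-n approximations, rationals coded via npair). *)
Definition computable_measure (m : list bool -> R) : Prop :=
  exists e : code, forall (s : list bool) (n : nat),
    exists a b, eval O0 e [str_code s; n] (npair a b) /\
                Rabs (rat_val a b - m s) <= (/2) ^ n.

(** The k-th level of the oracle-c.e. (domain of program e) sequence of sets. *)
Definition level (O : nat -> nat) (e : code) (k : nat) (s : list bool) : Prop :=
  exists y, eval O e [k; str_code s] y.

Definition MLR (O : nat -> nat) (m : list bool -> R) (x : nat -> bool) : Prop :=
  forall e : code,
    (forall k, open_meas_le m (level O e k) ((/2) ^ k)) ->
    ~ (forall k, exists s, level O e k s /\ extends x s).

Definition proper (x : nat -> bool) : Prop :=
  exists m, is_measure m /\ computable_measure m /\ MLR O0 m x.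

Definition continuously_proper (x : nat -> bool) : Prop :=
  exists m, is_measure m /\ computable_measure m /\ atomless m /\ MLR O0 m x.

Fixpoint bin_partial (b : nat -> bool) (n : nat) : R :=
  match n with
  | O => 0
  | S k => bin_partial b k + (if b k then (/2) ^ (S k) else 0)
  end.

Definition binary_expansion (r : R) (b : nat -> bool) : Prop :=
  forall n, bin_partial b n <= r <= bin_partial b n + (/2) ^ n.

From Stdlib Require Import Reals Lra Lia List Arith Bool Classical ClassicalEpsilon FinFun Cantor.
Import ListNotations.
Open Scope R_scope.

(* Take r = 1/2 with expansion b = 1000... . Being computable, b is an atom of a
   computable measure, hence proper; but an atomless computable measure gives the
   initial segments of b arbitrarily small mass, and since both the segments and
   (approximations of) their masses are computable, these segments form a
   Martin-Loef test capturing b. On the other side, any open set of measure below 1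
   misses some path (follow the nodes where the set keeps a margin of the mass), and
   the union of level j + 2 of the j-th test, over all tests relative to the empty
   oracle and to b, has measure at most 1/2; a path it misses is random for
   mu_{1/2} relative to b, and continuously proper since mu_{1/2} is computable and
   atomless. *)

Lemma sumR_app (l1 l2 : list R) : sumR (l1 ++ l2) = sumR l1 + sumR l2.
Proof. induction l1 as [|a l1 IH]; simpl; [|rewrite IH]; lra. Qed.

Lemma sumR_flat_map {A B} (m : B -> R) (f : A -> list B) (l : list A) :
  sumR (map m (flat_map f l)) = sumR (map (fun a => sumR (map m (f a))) l).
Proof. induction l as [|a l IH]; simpl; [lra|]. rewrite map_app, sumR_app, IH. lra. Qed.

Lemma sumR_filter {A} (m : A -> R) (f : A -> bool) (L : list A) :
  sumR (map m L) = sumR (map m (filter f L)) + sumR (map m (filter (fun x => negb (f x)) L)).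
Proof. induction L as [|a L IH]; simpl; [lra|]. destruct (f a); simpl; rewrite IH; lra. Qed.

Lemma sumR_le_incl {A} (f : A -> R) (L M : list A) :
  (forall x, 0 <= f x) -> NoDup L -> incl L M -> sumR (map f L) <= sumR (map f M).
Proof.
  intros Hf HN. revert M. induction HN as [|a L Ha HN IH]; intros M Hi.
  - clear Hi. induction M as [|b M IHM]; simpl in *; [lra|]. pose proof (Hf b). lra.
  - assert (Hin : In a M) by (apply Hi; simpl; auto).
    apply in_split in Hin as (M1 & M2 & ->).
    assert (Hi' : incl L (M1 ++ M2)).
    { intros y Hy. assert (Hy' : In y (M1 ++ a :: M2)) by (apply Hi; simpl; auto).
      apply in_app_or in Hy' as [H|[H|H]]; apply in_or_app; auto. subst; contradiction. }
    specialize (IH _ Hi'). rewrite map_app, sumR_app in *. simpl. lra.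
Qed.

Lemma NoDup_flat_map_disjoint {A B} (f : A -> list B) (l : list A) :
  NoDup l -> (forall x, In x l -> NoDup (f x)) ->
  (forall x y z, In x l -> In y l -> In z (f x) -> In z (f y) -> x = y) ->
  NoDup (flat_map f l).
Proof.
  induction l as [|a l IH]; simpl; intros Hl Hf Hd; [constructor|].
  inversion Hl; subst. apply NoDup_app.
  - apply Hf; auto.
  - apply IH; auto. intros x y z Hx Hy. apply Hd; auto.
  - intros z Hz Hz'. apply in_flat_map in Hz' as (y & Hy & Hzy).
    assert (a = y) by (apply (Hd a y z); auto). subst. contradiction.
Qed.

Lemma app_inj_length (u u' w w' : list bool) :
  length u = length u' -> u ++ w = u' ++ w' -> u = u' /\ w = w'.
Proof.
  revert u'; induction u; intros [|b u'] Hl H; simpl in *; try discriminate; auto.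
  injection H as -> H. injection Hl as Hl. destruct (IHu u' Hl H). subst; auto.
Qed.

Lemma is_prefix_trans s t u : is_prefix s t -> is_prefix t u -> is_prefix s u.
Proof. intros [a ->] [b ->]. exists (a ++ b). rewrite app_assoc; auto. Qed.

Lemma is_prefix_length s t : is_prefix s t -> (length s <= length t)%nat.
Proof. intros [a ->]. rewrite length_app. lia. Qed.

Lemma is_prefix_refl s : is_prefix s s.
Proof. exists []. rewrite app_nil_r; auto. Qed.

Lemma is_prefix_app s w : is_prefix s (s ++ w).
Proof. exists w; auto. Qed.

Lemma init_seg_length x n : length (init_seg x n) = n.
Proof. unfold init_seg. rewrite length_map, length_seq. auto. Qed.

Lemma init_seg_prefix x j i : (j <= i)%nat -> is_prefix (init_seg x j) (init_seg x i).
Proof.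
  intro H. unfold init_seg. exists (map x (seq j (i - j))).
  rewrite <- map_app, <- seq_app. do 2 f_equal. lia.
Qed.

Lemma extends_init_seg x s : extends x s <-> init_seg x (length s) = s.
Proof.
  unfold init_seg. split.
  - intro H. apply nth_ext with (d := false) (d' := false).
    + rewrite length_map, length_seq; auto.
    + intros i Hi. rewrite length_map, length_seq in Hi.
      rewrite (nth_indep _ false (x 0%nat)) by (rewrite length_map, length_seq; auto).
      rewrite map_nth, seq_nth by auto. apply H; auto.
  - intros Hs i Hi. rewrite <- Hs.
    rewrite (nth_indep _ false (x 0%nat)) by (rewrite length_map, length_seq; auto).
    rewrite map_nth, seq_nth by auto. auto.
Qed.

Lemma init_seg_extends x n : extends x (init_seg x n).
Proof. apply extends_init_seg. rewrite init_seg_length. auto. Qed.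

Lemma extends_snoc x s c : extends x (s ++ [c]) <-> extends x s /\ x (length s) = c.
Proof.
  rewrite !extends_init_seg, length_app. simpl. rewrite Nat.add_1_r.
  unfold init_seg. rewrite seq_S, map_app. simpl. split.
  - intro H. apply app_inj_tail in H as [-> [=]]. auto.
  - intros [-> ->]. reflexivity.
Qed.

Fixpoint all_strings (k : nat) : list (list bool) :=
  match k with
  | O => [[]]
  | S k' => flat_map (fun w => [w ++ [false]; w ++ [true]]) (all_strings k')
  end.

Lemma all_strings_length k w : In w (all_strings k) -> length w = k.
Proof.
  revert w; induction k; simpl; intros w H.
  - destruct H as [<-|[]]; reflexivity.
  - apply in_flat_map in H as (w' & Hw' & H).
    destruct H as [<-|[<-|[]]]; rewrite length_app, IHk by auto; simpl; lia.
Qed.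

Lemma in_all_strings k w : length w = k -> In w (all_strings k).
Proof.
  revert w; induction k; intros w Hw.
  - destruct w; try discriminate. simpl; auto.
  - destruct (exists_last (l := w)) as (w' & c & ->); [intro; subst; discriminate|].
    rewrite length_app in Hw. simpl in Hw. simpl. apply in_flat_map. exists w'.
    split; [apply IHk; lia|]. destruct c; simpl; auto.
Qed.

Lemma all_strings_NoDup k : NoDup (all_strings k).
Proof.
  induction k; simpl; [repeat constructor; simpl; tauto|].
  apply NoDup_flat_map_disjoint; auto.
  - intros w _. constructor; [|repeat constructor; simpl; tauto].
    simpl. intros [H|[]]. apply app_inv_head in H. discriminate.
  - intros x y z Hx Hy Hzx Hzy. simpl in *.
    assert (Hl : length x = length y)
      by (rewrite (all_strings_length k x), (all_strings_length k y); auto).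
    destruct Hzx as [<-|[<-|[]]]; destruct Hzy as [H|[H|[]]];
      (apply app_inj_length in H; [symmetry; tauto|]); lia.
Qed.

Lemma measure_sum_extensions (m : list bool -> R) u k :
  is_measure m -> sumR (map (fun w => m (u ++ w)) (all_strings k)) = m u.
Proof.
  intros (_ & _ & Hadd). induction k; simpl; [rewrite app_nil_r; lra|].
  rewrite sumR_flat_map, <- IHk. f_equal.
  apply map_ext. intro w. simpl. rewrite (Hadd (u ++ w)), !app_assoc. lra.
Qed.

Lemma measure_sum_below (m : list bool -> R) t n L :
  is_measure m -> NoDup L ->
  (forall u, In u L -> length u = n /\ is_prefix t u) -> sumR (map m L) <= m t.
Proof.
  intros Hm HN HL.
  rewrite <- (measure_sum_extensions m t (n - length t) Hm), <- (map_map (fun w => t ++ w) m).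
  apply sumR_le_incl; auto; [apply Hm|].
  intros u Hu. destruct (HL u Hu) as (Hl & [w ->]). apply in_map. apply in_all_strings.
  rewrite length_app in Hl. lia.
Qed.

(** * Avoiding an open set of measure less than one *)

Definition extensions (L : list (list bool)) (k : nat) : list (list bool) :=
  flat_map (fun u => map (fun w => u ++ w) (all_strings k)) L.

Lemma in_extensions L k v :
  In v (extensions L k) -> exists u w, In u L /\ length w = k /\ v = u ++ w.
Proof.
  intro H. apply in_flat_map in H as (u & Hu & H).
  apply in_map_iff in H as (w & <- & Hw). exists u, w. split; auto. split; auto.
  apply all_strings_length; auto.
Qed.

Lemma extensions_NoDup L k n :
  NoDup L -> (forall u, In u L -> length u = n) -> NoDup (extensions L k).
Proof.
  intros HL Hn. apply NoDup_flat_map_disjoint; auto.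
  - intros x _. apply Injective_map_NoDup; [|apply all_strings_NoDup].
    intros a b H. apply app_inv_head in H; auto.
  - intros x y z Hx Hy Hzx Hzy.
    apply in_map_iff in Hzx as (w & <- & _). apply in_map_iff in Hzy as (w' & H & _).
    apply app_inj_length in H; [symmetry; tauto|]. rewrite !Hn; auto.
Qed.

Lemma measure_sum_extensions_list m L k :
  is_measure m -> sumR (map m (extensions L k)) = sumR (map m L).
Proof.
  intro Hm. unfold extensions. rewrite sumR_flat_map. f_equal. apply map_ext. intro u.
  rewrite map_map. apply measure_sum_extensions; auto.
Qed.

Definition covers (V : list bool -> Prop) (t : list bool) (n : nat) (L : list (list bool)) :=
  NoDup L /\
  forall u, In u L -> length u = n /\ is_prefix t u /\ exists s, V s /\ is_prefix s u.

Lemma covers_extensions V t n L k :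
  covers V t n L -> covers V t (n + k) (extensions L k).
Proof.
  intros [HN HL]. split.
  - apply (extensions_NoDup _ _ n); auto. intros u Hu; apply HL; auto.
  - intros v Hv. apply in_extensions in Hv as (u & w & Hu & Hw & ->).
    destruct (HL u Hu) as (Hl & Ht & s & Vs & Hs). rewrite length_app.
    split; [lia|]. split; [|exists s; split; auto];
      eapply is_prefix_trans; eauto; apply is_prefix_app.
Qed.

Lemma covers_children V t n0 n1 L0 L1 :
  covers V (t ++ [false]) n0 L0 -> covers V (t ++ [true]) n1 L1 ->
  covers V t (n0 + n1) (extensions L0 n1 ++ extensions L1 n0).
Proof.
  intros H0 H1.
  pose proof (covers_extensions _ _ _ _ n1 H0) as [HN0 HC0].
  pose proof (covers_extensions _ _ _ _ n0 H1) as [HN1 HC1].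
  split.
  - apply NoDup_app; auto. intros a Ha Ha'.
    destruct (HC0 a Ha) as (_ & [p ->] & _). destruct (HC1 _ Ha') as (_ & [p' Heq] & _).
    rewrite <- !app_assoc in Heq. apply app_inv_head in Heq. discriminate.
  - intros v Hv. apply in_app_or in Hv as [Hv|Hv];
      [destruct (HC0 v Hv) as (Hl & Hp & Hs) | destruct (HC1 v Hv) as (Hl & Hp & Hs)];
      (split; [lia|split; auto]); eapply is_prefix_trans; eauto; apply is_prefix_app.
Qed.

Definition thin_below (m : list bool -> R) (V : list bool -> Prop) (t : list bool) :=
  exists d, d > 0 /\ forall n L, covers V t n L -> sumR (map m L) <= m t - d.

Lemma thin_below_child m V t : is_measure m ->
  thin_below m V t -> thin_below m V (t ++ [false]) \/ thin_below m V (t ++ [true]).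
Proof.
  intros Hm [d [Hd HG]]. apply NNPP. intro Hn. apply not_or_and in Hn as [H0 H1].
  assert (Hthick : forall c, ~ thin_below m V (t ++ [c]) -> exists n L,
             covers V (t ++ [c]) n L /\ sumR (map m L) > m (t ++ [c]) - d / 2).
  { intros c Hc. apply NNPP. intro Hx. apply Hc. exists (d / 2). split; [lra|].
    intros n L HL. apply Rnot_gt_le. intro Hgt. apply Hx. exists n, L. auto. }
  destruct (Hthick _ H0) as (n0 & L0 & HC0 & HS0).
  destruct (Hthick _ H1) as (n1 & L1 & HC1 & HS1).
  specialize (HG _ _ (covers_children _ _ _ _ _ _ HC0 HC1)).
  rewrite map_app, sumR_app, !measure_sum_extensions_list in HG by auto.
  destruct Hm as (_ & _ & Hadd). rewrite (Hadd t) in HG. lra.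
Qed.

Definition thin_bit m V (t : list bool) : bool :=
  if excluded_middle_informative (thin_below m V (t ++ [false])) then false else true.

Fixpoint thin_path m V (n : nat) : list bool :=
  match n with O => [] | S k => thin_path m V k ++ [thin_bit m V (thin_path m V k)] end.

Lemma thin_path_thin m V : is_measure m -> thin_below m V [] ->
  forall n, thin_below m V (thin_path m V n).
Proof.
  intros Hm H0 n; induction n; simpl; auto. unfold thin_bit.
  destruct excluded_middle_informative; auto.
  destruct (thin_below_child m V _ Hm IHn); tauto.
Qed.

Lemma init_seg_thin_path m V n :
  init_seg (fun i => thin_bit m V (thin_path m V i)) n = thin_path m V n.
Proof.
  induction n; auto. unfold init_seg in *. rewrite seq_S, map_app, IHn. reflexivity.
Qed.

(* Descend along thin nodes: a string of [V] would be a thin node covering itself. *)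
Lemma exists_avoiding m V c : is_measure m -> open_meas_le m V c -> c < 1 ->
  exists x, forall s, V s -> ~ extends x s.
Proof.
  intros Hm HV Hc. assert (G0 : thin_below m V []).
  { exists (1 - c). split; [lra|]. intros n L [HN HL]. destruct Hm as [-> _].
    enough (sumR (map m L) <= c) by lra. apply (HV n L HN).
    intros u Hu. destruct (HL u Hu) as (? & _ & ?). auto. }
  exists (fun i => thin_bit m V (thin_path m V i)). intros s Vs Hx.
  apply extends_init_seg in Hx. rewrite init_seg_thin_path in Hx.
  destruct (thin_path_thin m V Hm G0 (length s)) as [d [Hd HG]]. rewrite Hx in HG.
  assert (HL : covers V s (length s) [s]).
  { split; [repeat constructor; simpl; tauto|]. intros u [<-|[]].
    split; auto. split; [apply is_prefix_refl|]. exists s. split; auto. apply is_prefix_refl. }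
  specialize (HG _ _ HL). simpl in HG. lra.
Qed.

(** * Random sequences relative to countably many oracles *)

Lemma open_meas_le_union_first m (W : nat -> list bool -> Prop) :
  (forall j, open_meas_le m (W j) ((/2) ^ (S (S j)))) ->
  forall N, open_meas_le m (fun s => exists j, (j < N)%nat /\ W j s) (/2 - (/2) ^ (S N)).
Proof.
  intros HW N. induction N; intros n L HN HL.
  - destruct L as [|u L]; [simpl; lra|].
    destruct (HL u (or_introl eq_refl)) as (_ & s & (j & Hj & _) & _). lia.
  - set (f := fun u => if excluded_middle_informative (exists s, W N s /\ is_prefix s u)
                       then true else false).
    rewrite (sumR_filter m f).
    assert (H1 : sumR (map m (filter f L)) <= (/2) ^ (S (S N))).
    { apply (HW N n); [apply NoDup_filter; auto|]. intros t Ht.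
      apply filter_In in Ht as [Ht Hf]. unfold f in Hf.
      destruct excluded_middle_informative; [|discriminate]. split; auto. apply HL; auto. }
    assert (H2 : sumR (map m (filter (fun x => negb (f x)) L)) <= /2 - (/2) ^ (S N)).
    { apply (IHN n); [apply NoDup_filter; auto|]. intros t Ht.
      apply filter_In in Ht as [Ht Hf]. unfold f in Hf.
      destruct excluded_middle_informative as [|Hn]; [discriminate|].
      destruct (HL t Ht) as (Hl & s & (j & Hj & Ws) & Hs). split; auto. exists s.
      split; auto. exists j. split; auto.
      destruct (Nat.eq_dec j N); [subst; exfalso; eauto|lia]. }
    simpl in *. lra.
Qed.

Lemma open_meas_le_union m (W : nat -> list bool -> Prop) :
  (forall j, open_meas_le m (W j) ((/2) ^ (S (S j)))) ->
  open_meas_le m (fun s => exists j, W j s) (/2).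
Proof.
  intros HW n L HN HL.
  assert (HB : exists N, forall u, In u L ->
             length u = n /\ exists s, (exists j, (j < N)%nat /\ W j s) /\ is_prefix s u).
  { clear HN. induction L as [|a L IH]; [exists O; intros u []|].
    destruct IH as [N HN]; [intros u Hu; apply HL; simpl; auto|].
    destruct (HL a (or_introl eq_refl)) as (Hl & s & [j Ws] & Hs).
    exists (S (Nat.max N j)). intros u [<-|Hu].
    - split; auto. exists s. split; auto. exists j. split; [lia|auto].
    - destruct (HN u Hu) as (Hl' & s' & (j' & Hj' & Ws') & Hs'). split; auto.
      exists s'. split; auto. exists j'. split; [lia|auto]. }
  destruct HB as [N HB]. pose proof (open_meas_le_union_first m W HW N n L HN HB).
  pose proof (pow_lt (/2) (S N)). lra.
Qed.


Definition code_ind_nested (P : code -> Prop)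
  (H0 : P CZero) (H1 : P CSucc) (H2 : forall i, P (CProj i)) (H3 : P COracle)
  (H4 : forall f gs, P f -> Forall P gs -> P (CComp f gs))
  (H5 : forall f g, P f -> P g -> P (CPrec f g))
  (H6 : forall f, P f -> P (CMu f)) : forall c, P c :=
  fix F c := match c with
  | CZero => H0 | CSucc => H1 | CProj i => H2 i | COracle => H3
  | CComp f gs => H4 f gs (F f)
      ((fix G l := match l return Forall P l with
                   | [] => Forall_nil _ | g :: l' => Forall_cons _ (F g) (G l') end) gs)
  | CPrec f g => H5 f g (F f) (F g)
  | CMu f => H6 f (F f)
  end.

Arguments to_nat : simpl never.
Fixpoint code_to_nat (c : code) : nat :=
  match c with
  | CZero => to_nat (0, 0)%nat
  | CSucc => to_nat (1, 0)%nat
  | CProj i => to_nat (2, i)%nat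
  | COracle => to_nat (3, 0)%nat
  | CComp f gs => to_nat (4, to_nat (code_to_nat f,
       (fix codes l := match l with
                       | [] => 0 | g :: l' => S (to_nat (code_to_nat g, codes l')) end) gs))%nat
  | CPrec f g => to_nat (5, to_nat (code_to_nat f, code_to_nat g))%nat
  | CMu f => to_nat (6, code_to_nat f)%nat
  end.

Lemma code_to_nat_inj : forall c c', code_to_nat c = code_to_nat c' -> c = c'.
Proof.
  induction c using code_ind_nested; intros [] Heq; simpl in Heq;
    apply to_nat_inj in Heq; try discriminate; try (injection Heq; intros; subst); auto.
  all: try (match goal with H : to_nat _ = to_nat _ |- _ =>
              apply to_nat_inj in H; injection H as E1 E2 end).
  all: f_equal; auto.
  match goal with HF : Forall _ _ |- _ => clear - HF E2; revert gs0 E2; induction HF end;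
    intros [|g' l'] Hl; try discriminate; auto.
  injection Hl as Hl. apply to_nat_inj in Hl. injection Hl as Hl Hl'. f_equal; auto.
Qed.

Definition ML_test (O : nat -> nat) (m : list bool -> R) (e : code) :=
  forall k, open_meas_le m (level O e k) ((/2) ^ k).

(* Level [j + 2] of the test coded by [j], so that the union has measure at most 1/2. *)
Definition diagonal_levels (Os : nat -> nat -> nat) m (j : nat) (s : list bool) : Prop :=
  exists i e, j = to_nat (i, code_to_nat e) /\ ML_test (Os i) m e /\
              level (Os i) e (S (S j)) s.

Lemma diagonal_levels_small Os m j :
  open_meas_le m (diagonal_levels Os m j) ((/2) ^ (S (S j))).
Proof.
  intros n [|a L] HN HL; [cbn [map sumR]; pose proof (pow_lt (/2) (S (S j))); lra|].
  destruct (HL a (or_introl eq_refl)) as (_ & s & (i & e & Hj & HT & _) & _).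
  apply (HT (S (S j)) n (a :: L) HN). intros t Ht.
  destruct (HL t Ht) as (Hlen & s' & (i' & e' & Hj' & _ & Hl) & Hp).
  split; auto. exists s'. split; auto.
  rewrite Hj in Hj'. apply to_nat_inj in Hj'. injection Hj' as <- He.
  apply code_to_nat_inj in He. subst. auto.
Qed.

Lemma exists_random_for_oracles m (Os : nat -> nat -> nat) :
  is_measure m -> exists x, forall i, MLR (Os i) m x.
Proof.
  intro Hm.
  destruct (exists_avoiding m (fun s => exists j, diagonal_levels Os m j s) (/2) Hm)
    as [x Hx]; [apply open_meas_le_union, diagonal_levels_small | lra |].
  exists x. intros i e HT Hc.
  destruct (Hc (S (S (to_nat (i, code_to_nat e))))) as (s & Hs & Hxs).
  apply (Hx s); auto. eexists _, i, e. split; eauto.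
Qed.

(** * Programs and codes *)

Open Scope nat_scope.

Section Programs.
Variable O : nat -> nat.

Lemma eval_output_eq c l y y' : eval O c l y -> y = y' -> eval O c l y'.
Proof. intros H <-; exact H. Qed.

Lemma eval_comp1 f g args y z :
  eval O g args y -> eval O f [y] z -> eval O (CComp f [g]) args z.
Proof. intros; econstructor; [repeat econstructor; eauto | eauto]. Qed.

Lemma eval_comp2 f g1 g2 args y1 y2 z : eval O g1 args y1 -> eval O g2 args y2 ->
  eval O f [y1; y2] z -> eval O (CComp f [g1; g2]) args z.
Proof. intros; econstructor; [repeat econstructor; eauto | eauto]. Qed.

Lemma eval_prec f g rest (F : nat -> nat) : eval O f rest (F 0) ->
  (forall i, eval O g (i :: F i :: rest) (F (S i))) ->
  forall n, eval O (CPrec f g) (n :: rest) (F n).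
Proof. intros H0 HS n; induction n; [constructor|econstructor]; eauto. Qed.

End Programs.

Create HintDb prog.
#[local] Hint Resolve eval_comp1 eval_comp2 e_proj e_zero e_succ : prog.

Ltac eval_prog := eapply eval_output_eq; [eauto 30 with prog | cbn [nth hd]].

(* Unary functions defined by primitive recursion on their argument. *)
Ltac eval_rec F := eapply eval_comp1; [apply e_proj|];
  apply (eval_prec _ _ _ [] F); [|intro i]; eval_prog.

Definition c_one := CComp CSucc [CZero].
Lemma eval_one O l : eval O c_one l 1.
Proof. eval_prog. reflexivity. Qed.
#[local] Hint Resolve eval_one : prog.

Definition c_two := CComp CSucc [c_one].
Lemma eval_two O l : eval O c_two l 2.
Proof. eval_prog. reflexivity. Qed.
#[local] Hint Resolve eval_two : prog.

Definition c_three := CComp CSucc [c_two].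
Lemma eval_three O l : eval O c_three l 3.
Proof. eval_prog. reflexivity. Qed.
#[local] Hint Resolve eval_three : prog.

Definition c_add := CComp (CPrec (CProj 0) (CComp CSucc [CProj 1])) [CProj 0; CProj 1].
Lemma eval_add O x y l : eval O c_add (x :: y :: l) (x + y).
Proof.
  eapply eval_comp2; [apply e_proj | apply e_proj|]. cbn [nth].
  apply (eval_prec O _ _ [y] (fun n => n + y)); [|intro i]; eval_prog; reflexivity.
Qed.
#[local] Hint Resolve eval_add : prog.

Definition c_mul := CComp (CPrec CZero (CComp c_add [CProj 1; CProj 2])) [CProj 0; CProj 1].
Lemma eval_mul O x y l : eval O c_mul (x :: y :: l) (x * y).
Proof.
  eapply eval_comp2; [apply e_proj | apply e_proj|]. cbn [nth].
  apply (eval_prec O _ _ [y] (fun n => n * y)); [|intro i]; eval_prog; lia.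
Qed.
#[local] Hint Resolve eval_mul : prog.

Definition c_pred := CComp (CPrec CZero (CProj 0)) [CProj 0].
Lemma eval_pred O x l : eval O c_pred (x :: l) (Nat.pred x).
Proof. eval_rec Nat.pred; reflexivity. Qed.
#[local] Hint Resolve eval_pred : prog.

Definition c_sub := CComp (CPrec (CProj 0) (CComp c_pred [CProj 1])) [CProj 1; CProj 0].
Lemma eval_sub O x y l : eval O c_sub (x :: y :: l) (x - y).
Proof.
  eapply eval_comp2; [apply e_proj | apply e_proj|]. cbn [nth].
  apply (eval_prec O _ _ [x] (fun n => x - n)); [|intro i]; eval_prog; lia.
Qed.
#[local] Hint Resolve eval_sub : prog.

Definition c_eqb :=
  CComp c_sub [c_one; CComp c_add [CComp c_sub [CProj 0; CProj 1]; CComp c_sub [CProj 1; CProj 0]]].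
Lemma eval_eqb O x y l : eval O c_eqb (x :: y :: l) (Nat.b2n (x =? y)).
Proof. eval_prog. destruct (Nat.eqb_spec x y); cbn [Nat.b2n]; lia. Qed.
#[local] Hint Resolve eval_eqb : prog.

Definition c_leb := CComp c_sub [c_one; CComp c_sub [CProj 0; CProj 1]].
Lemma eval_leb O x y l : eval O c_leb (x :: y :: l) (Nat.b2n (x <=? y)).
Proof. eval_prog. destruct (Nat.leb_spec x y); cbn [Nat.b2n]; lia. Qed.
#[local] Hint Resolve eval_leb : prog.

Definition c_pow2 := CComp (CPrec c_one (CComp c_add [CProj 1; CProj 1])) [CProj 0].
Lemma eval_pow2 O x l : eval O c_pow2 (x :: l) (2 ^ x).
Proof. eval_rec (fun n => 2 ^ n); cbn; lia. Qed.
#[local] Hint Resolve eval_pow2 : prog.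

Definition c_even := CComp (CPrec c_one (CComp c_sub [c_one; CProj 1])) [CProj 0].
Lemma eval_even O x l : eval O c_even (x :: l) (Nat.b2n (Nat.even x)).
Proof. eval_rec (fun n => Nat.b2n (Nat.even n)); [reflexivity|].
  rewrite Nat.even_succ, <- Nat.negb_even. destruct (Nat.even i); reflexivity. Qed.
#[local] Hint Resolve eval_even : prog.

Fixpoint tri (n : nat) : nat := match n with O => 0 | S k => tri k + S k end.

Definition c_tri := CComp (CPrec CZero (CComp c_add [CProj 1; CComp CSucc [CProj 0]])) [CProj 0].
Lemma eval_tri O x l : eval O c_tri (x :: l) (tri x).
Proof. eval_rec tri; reflexivity. Qed.
#[local] Hint Resolve eval_tri : prog.

(* The largest [s] with [tri s <= n]. *)
Fixpoint tri_inv (n : nat) : nat :=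
  match n with O => 0 | S k => tri_inv k + Nat.b2n (tri (S (tri_inv k)) <=? S k) end.

Definition c_tri_inv := CComp (CPrec CZero (CComp c_add [CProj 1;
  CComp c_leb [CComp c_tri [CComp CSucc [CProj 1]]; CComp CSucc [CProj 0]]])) [CProj 0].
Lemma eval_tri_inv O x l : eval O c_tri_inv (x :: l) (tri_inv x).
Proof. eval_rec tri_inv; reflexivity. Qed.
#[local] Hint Resolve eval_tri_inv : prog.

(* The largest power of two below [S n]. *)
Fixpoint pow2_floor (n : nat) : nat :=
  match n with
  | O => 1
  | S k => pow2_floor k + pow2_floor k * Nat.b2n (pow2_floor k + pow2_floor k =? S (S k))
  end.

Definition c_pow2_floor := CComp (CPrec c_one (CComp c_add [CProj 1; CComp c_mul [CProj 1;
  CComp c_eqb [CComp c_add [CProj 1; CProj 1]; CComp CSucc [CComp CSucc [CProj 0]]]]])) [CProj 0].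
Lemma eval_pow2_floor O x l : eval O c_pow2_floor (x :: l) (pow2_floor x).
Proof. eval_rec pow2_floor; reflexivity. Qed.
#[local] Hint Resolve eval_pow2_floor : prog.

Lemma tri_double n : tri n * 2 = n * S n.
Proof. induction n; simpl tri; lia. Qed.

Lemma npair_tri a b : npair a b = tri (a + b) + b.
Proof. unfold npair. f_equal. rewrite Nat.add_1_r, <- tri_double. apply Nat.div_mul. lia. Qed.

Lemma tri_mono i j : i <= j -> tri i <= tri j.
Proof. induction 1; simpl; lia. Qed.

Lemma tri_inv_spec n : tri (tri_inv n) <= n < tri (S (tri_inv n)).
Proof.
  induction n; [simpl; lia|].
  cbn [tri_inv]. set (s := tri_inv n) in *.
  destruct (Nat.leb_spec (tri (S s)) (S n)); cbn [Nat.b2n].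
  - rewrite Nat.add_1_r. change (tri (S (S s))) with (tri (S s) + S (S s)). lia.
  - rewrite Nat.add_0_r. lia.
Qed.

Lemma tri_inv_unique n s : tri s <= n < tri (S s) -> tri_inv n = s.
Proof.
  intros H. pose proof (tri_inv_spec n).
  destruct (Nat.lt_trichotomy (tri_inv n) s) as [Hl|[Hl|Hl]]; auto.
  - pose proof (tri_mono (S (tri_inv n)) s Hl). lia.
  - pose proof (tri_mono (S s) (tri_inv n) Hl). lia.
Qed.

Definition unpair2 (y : nat) : nat := y - tri (tri_inv y).
Definition unpair1 (y : nat) : nat := tri_inv y - unpair2 y.

Lemma unpair_npair a b : unpair1 (npair a b) = a /\ unpair2 (npair a b) = b.
Proof.
  assert (Hinv : tri_inv (npair a b) = a + b).
  { apply tri_inv_unique. rewrite npair_tri. simpl. lia. }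
  unfold unpair1, unpair2. rewrite Hinv, npair_tri. lia.
Qed.

Definition c_npair := CComp c_add [CComp c_tri [c_add]; CProj 1].
Lemma eval_npair O a b l : eval O c_npair (a :: b :: l) (npair a b).
Proof. eval_prog. symmetry. apply npair_tri. Qed.
#[local] Hint Resolve eval_npair : prog.

Definition c_unpair2 := CComp c_sub [CProj 0; CComp c_tri [CComp c_tri_inv [CProj 0]]].
Lemma eval_unpair2 O y l : eval O c_unpair2 (y :: l) (unpair2 y).
Proof. eval_prog. reflexivity. Qed.
#[local] Hint Resolve eval_unpair2 : prog.

Definition c_unpair1 := CComp c_sub [CComp c_tri_inv [CProj 0]; c_unpair2].
Lemma eval_unpair1 O y l : eval O c_unpair1 (y :: l) (unpair1 y).
Proof. eval_prog. reflexivity. Qed.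
#[local] Hint Resolve eval_unpair1 : prog.

Definition rat_small (a b k : nat) : bool :=
  negb (Nat.even a) || (a * 2 ^ S k <=? 3 * S b).

Definition c_rat_small := CComp c_sub [c_one; CComp c_mul [CComp c_even [c_unpair1];
  CComp c_sub [c_one; CComp c_leb [CComp c_mul [c_unpair1; CComp c_pow2 [CComp CSucc [CProj 1]]];
    CComp c_mul [c_three; CComp CSucc [c_unpair2]]]]]].
Lemma eval_rat_small O y k l :
  eval O c_rat_small (y :: k :: l) (Nat.b2n (rat_small (unpair1 y) (unpair2 y) k)).
Proof.
  eval_prog. unfold rat_small.
  destruct (Nat.even _), (_ <=? _); reflexivity.
Qed.
#[local] Hint Resolve eval_rat_small : prog.

Open Scope R_scope.

Lemma nat_frac_le_iff (q B N : nat) :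
  INR q / INR (S B) <= 3 * (/2) ^ N <-> (q * 2 ^ N <= 3 * S B)%nat.
Proof.
  assert (HB : 0 < INR (S B)) by (apply lt_0_INR; lia).
  assert (HN : INR (2 ^ N) = 2 ^ N) by (rewrite pow_INR; simpl; f_equal; lra).
  assert (HNpos : 0 < 2 ^ N) by (apply pow_lt; lra).
  assert (Hscale : forall u v, u / INR (S B) <= v / 2 ^ N <-> u * 2 ^ N <= v * INR (S B)).
  { intros u v. unfold Rdiv. split; intro H.
    - apply (Rmult_le_compat_r (INR (S B) * 2 ^ N)) in H; [|nra].
      replace (u * / INR (S B) * (INR (S B) * 2 ^ N)) with (u * 2 ^ N) in H by (field; lra).
      replace (v * / 2 ^ N * (INR (S B) * 2 ^ N)) with (v * INR (S B)) in H by (field; lra).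
      exact H.
    - apply (Rmult_le_reg_r (INR (S B) * 2 ^ N)); [nra|].
      replace (u * / INR (S B) * (INR (S B) * 2 ^ N)) with (u * 2 ^ N) by (field; lra).
      replace (v * / 2 ^ N * (INR (S B) * 2 ^ N)) with (v * INR (S B)) by (field; lra).
      exact H. }
  replace (3 * (/2) ^ N) with (INR 3 / 2 ^ N)
    by (rewrite pow_inv; simpl INR; unfold Rdiv; ring).
  rewrite Hscale, <- HN, <- !mult_INR. split; [apply INR_le | apply le_INR].
Qed.

Lemma rat_val_even q b : rat_val (2 * q) b = INR q / INR (S b).
Proof.
  unfold rat_val, zdec. rewrite Nat.even_mul. simpl Nat.even.
  rewrite Nat.mul_comm, Nat.div_mul by lia. cbn [orb]. rewrite <- INR_IZR_INZ. auto.
Qed.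

Lemma rat_val_odd a b : Nat.even a = false -> rat_val a b <= 0.
Proof.
  intro Ha. unfold rat_val, zdec. rewrite Ha, opp_IZR, <- INR_IZR_INZ.
  assert (0 < / INR (S b)) by (apply Rinv_0_lt_compat, lt_0_INR; lia).
  pose proof (pos_INR ((a + 1) / 2)). unfold Rdiv. nra.
Qed.

Lemma rat_small_iff a b k : rat_small a b k = true <-> rat_val a b <= 3 * (/2) ^ S (S k).
Proof.
  unfold rat_small. destruct (Nat.even a) eqn:Ha; simpl negb; cbn [orb].
  - apply Nat.even_spec in Ha as [q ->]. rewrite rat_val_even, nat_frac_le_iff, Nat.leb_le.
    rewrite (Nat.pow_succ_r' 2 (S k)). split; lia.
  - pose proof (rat_val_odd a b Ha). pose proof (pow_lt (/2) (S (S k))). split; auto. lra.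
Qed.

Close Scope R_scope.

Section Determinism.
Variable O : nat -> nat.

Definition deterministic c := forall args y y', eval O c args y -> eval O c args y' -> y = y'.

Lemma evals_deterministic gs : Forall deterministic gs ->
  forall args ys ys', evals O gs args ys -> evals O gs args ys' -> ys = ys'.
Proof.
  induction 1; intros args ys ys' H1 H2; inversion H1; inversion H2; subst; auto.
  f_equal; eauto.
Qed.

Lemma prec_deterministic f g : deterministic f -> deterministic g -> forall n rest y y',
  eval O (CPrec f g) (n :: rest) y -> eval O (CPrec f g) (n :: rest) y' -> y = y'.
Proof.
  intros Hf Hg n; induction n; intros rest y y' H1 H2;
    inversion H1; subst; inversion H2; subst; eauto.
  assert (z = z0) by eauto. subst. eauto.
Qed.

Lemma eval_deterministic c : deterministic c.
Proof.
  induction c using code_ind_nested; intros args y y' H1 H2.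
  1-4: inversion H1; inversion H2; subst; auto.
  - inversion H1; subst. inversion H2; subst.
    assert (ys = ys0) by (eapply evals_deterministic; eauto). subst. eapply IHc; eauto.
  - destruct args as [|n rest]; [inversion H1|].
    exact (prec_deterministic _ _ IHc1 IHc2 n rest y y' H1 H2).
  - inversion H1; subst. inversion H2; subst.
    destruct (Nat.lt_trichotomy y y') as [Hl|[Hl|Hl]]; auto; exfalso.
    + match goal with H : forall z, z < y' -> _ |- _ => destruct (H _ Hl) as (v & Hv & Ev) end.
      match goal with H : eval O _ (y :: args) 0 |- _ => specialize (IHc _ _ _ H Ev) end. lia.
    + match goal with H : forall z, z < y -> _ |- _ => destruct (H _ Hl) as (v & Hv & Ev) end.
      match goal with H : eval O _ (y' :: args) 0 |- _ => specialize (IHc _ _ _ H Ev) end. lia.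
Qed.

End Determinism.

Lemma pow2_floor_spec n : exists K, pow2_floor n = 2 ^ K /\ 2 ^ K <= S n < 2 ^ S K.
Proof.
  induction n; [exists 0; simpl; lia|].
  destruct IHn as (K & HK & H1 & H2). simpl pow2_floor. rewrite HK.
  destruct (Nat.eqb_spec (2 ^ K + 2 ^ K) (S (S n))); cbn [Nat.b2n];
    [exists (S K) | exists K]; simpl in *; lia.
Qed.

Lemma pow2_exponent_unique K L n : 2 ^ K <= n < 2 ^ S K -> 2 ^ L <= n < 2 ^ S L -> K = L.
Proof.
  intros H1 H2. destruct (Nat.lt_trichotomy K L) as [Hl|[Hl|Hl]]; auto.
  - assert (2 ^ S K <= 2 ^ L) by (apply Nat.pow_le_mono_r; lia). lia.
  - assert (2 ^ S L <= 2 ^ K) by (apply Nat.pow_le_mono_r; lia). lia.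
Qed.

Lemma str_code_bound s : 2 ^ length s <= S (str_code s) < 2 ^ S (length s).
Proof. induction s as [|[] s IH]; simpl in *; lia. Qed.

Lemma pow2_floor_str_code s : pow2_floor (str_code s) = 2 ^ length s.
Proof.
  destruct (pow2_floor_spec (str_code s)) as (K & -> & H). f_equal.
  eapply pow2_exponent_unique; eauto. apply str_code_bound.
Qed.

(* Among strings of a given length, the all-[false] one has the least code. *)
Lemma str_code_repeat_false t : S (str_code t) = 2 ^ length t <-> t = repeat false (length t).
Proof.
  induction t as [|[] t IH]; simpl; [tauto| |].
  - pose proof (str_code_bound t). split; [lia|discriminate].
  - split; intro H; [f_equal; apply IH; lia|injection H as H; apply IH in H; lia].
Qed.

(** * Computable sequences are proper but not continuously proper *)

Open Scope R_scope.

Lemma Rabs_le_between x a : Rabs x <= a -> - a <= x <= a.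
Proof. intro H. pose proof (Rle_abs x). pose proof (Rle_abs (- x)). rewrite Rabs_Ropp in *. lra.
Qed.

Lemma exists_least (P : nat -> Prop) :
  (exists j, P j) -> exists j, P j /\ forall i, P i -> (j <= i)%nat.
Proof.
  intros [j Hj]. induction j as [j IH] using (well_founded_induction lt_wf).
  destruct (classic (exists i, (i < j)%nat /\ P i)) as [[i [Hi Pi]]|Hn]; [apply (IH i Hi Pi)|].
  exists j. split; auto. intros i Pi. destruct (Nat.lt_ge_cases i j); auto. exfalso; eauto.
Qed.

Section DecidableSequence.

Variables (x : nat -> bool) (d : list bool -> bool) (p : code).
Hypothesis d_spec : forall s, d s = true <-> extends x s.
Hypothesis p_decides : forall s, eval O0 p [str_code s] (Nat.b2n (d s)).

Definition dirac (s : list bool) : R := if d s then 1 else 0.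

Lemma dirac_measure : is_measure dirac.
Proof.
  unfold dirac. split; [|split].
  - replace (d []) with true; [reflexivity|]. symmetry. apply d_spec. intros i Hi. simpl in Hi. lia.
  - intro s. destruct (d s); lra.
  - intro s. assert (Hsnoc : forall c, d (s ++ [c]) = d s && Bool.eqb (x (length s)) c).
    { intro c. apply eq_true_iff_eq. rewrite andb_true_iff, eqb_true_iff, !d_spec.
      apply extends_snoc. }
    rewrite !Hsnoc. destruct (d s), (x (length s)); simpl; lra.
Qed.

Definition c_dirac := CComp c_npair [CComp c_mul [c_two; CComp p [CProj 0]]; CZero].

Lemma dirac_computable : computable_measure dirac.
Proof.
  exists c_dirac. intros s n.
  exists (2 * Nat.b2n (d s))%nat, 0%nat. split; [unfold c_dirac; eval_prog; reflexivity|].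
  rewrite rat_val_even. pose proof (pow_le (/2) n ltac:(lra)).
  unfold dirac. destruct (d s); simpl; rewrite Rminus_diag_eq by lra; rewrite Rabs_R0; lra.
Qed.

Lemma dirac_MLR : MLR O0 dirac x.
Proof.
  intros e HT Hc. destruct (Hc 1%nat) as (s & Hs & Hx).
  assert (Hsum : sumR (map dirac [s]) <= (/2) ^ 1).
  { apply (HT 1%nat (length s)); [repeat constructor; simpl; tauto|].
    intros t [<-|[]]. split; auto. exists s. split; auto. apply is_prefix_refl. }
  simpl in Hsum. unfold dirac in Hsum.
  replace (d s) with true in Hsum by (symmetry; apply d_spec; auto). lra.
Qed.

Lemma decidable_proper : proper x.
Proof.
  exists dirac. split; [apply dirac_measure|].
  split; [apply dirac_computable|apply dirac_MLR].
Qed.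

(* Level [k] enumerates the initial segments [s] of [x] whose mass, approximated to
   within [2^-(k+2)], is at most [3 * 2^-(k+2)]. *)
Definition small_mass_body (em : code) : code :=
  CComp c_sub [c_one; CComp c_mul [CComp p [CProj 2];
    CComp c_rat_small [CComp em [CProj 2; CComp CSucc [CComp CSucc [CProj 1]]]; CProj 1]]].

Definition small_mass_test (em : code) : code := CMu (small_mass_body em).

Lemma eval_small_mass_body em w k s y :
  eval O0 em [str_code s; S (S k)] y ->
  eval O0 (small_mass_body em) [w; k; str_code s]
    (1 - Nat.b2n (d s) * Nat.b2n (rat_small (unpair1 y) (unpair2 y) k)).
Proof. intro He. pose proof (p_decides s). unfold small_mass_body. eval_prog. reflexivity. Qed.

Section ComputableMeasure.

Variables (m : list bool -> R) (em : code).
Hypothesis em_approx : forall s n, exists a b,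
  eval O0 em [str_code s; n] (npair a b) /\ Rabs (rat_val a b - m s) <= (/2) ^ n.

Lemma small_mass_level_sound k s :
  level O0 (small_mass_test em) k s -> extends x s /\ m s <= (/2) ^ k.
Proof.
  intros [y Hy]. inversion Hy as [| | | | | | | f args y' Hz Hlt]; subst.
  destruct (em_approx s (S (S k))) as (a & b & Ha & Hb).
  pose proof (eval_deterministic _ _ _ _ _ Hz (eval_small_mass_body _ y k s _ Ha)) as E.
  destruct (unpair_npair a b) as [Ea Eb]. rewrite Ea, Eb in E.
  destruct (d s) eqn:Hd, (rat_small a b k) eqn:Hr; cbn [Nat.b2n] in E; try lia.
  split; [apply d_spec; auto|]. apply rat_small_iff in Hr. apply Rabs_le_between in Hb.
  replace ((/2) ^ S (S k)) with ((/2) ^ k * / 4) in * by (simpl; field). lra.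
Qed.

Lemma small_mass_level_complete k n :
  m (init_seg x n) <= (/2) ^ S (S k) -> level O0 (small_mass_test em) k (init_seg x n).
Proof.
  intro Hsmall. destruct (em_approx (init_seg x n) (S (S k))) as (a & b & Ha & Hb).
  apply Rabs_le_between in Hb.
  assert (Hr : rat_small a b k = true).
  { apply rat_small_iff. pose proof (pow_lt (/2) (S (S k))). lra. }
  pose proof (eval_small_mass_body _ 0 k _ _ Ha) as H0.
  destruct (unpair_npair a b) as [Ea Eb]. rewrite Ea, Eb, Hr in H0.
  replace (d (init_seg x n)) with true in H0 by (symmetry; apply d_spec, init_seg_extends).
  exists 0%nat. constructor; [exact H0|]. intros z Hz. lia.
Qed.

(* Every string of level [k] extends the shortest initial segment of [x] in level [k]. *)
Lemma small_mass_test_bound k :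
  is_measure m -> open_meas_le m (level O0 (small_mass_test em) k) ((/2) ^ k).
Proof.
  intros Hm n L HN HL. destruct L as [|u0 L0]; [simpl; pose proof (pow_lt (/2) k); lra|].
  set (P := fun j => (j <= n)%nat /\ level O0 (small_mass_test em) k (init_seg x j)).
  assert (HP : forall u, In u (u0 :: L0) ->
             exists s, P (length s) /\ s = init_seg x (length s) /\ is_prefix s u).
  { intros u Hu. destruct (HL u Hu) as (Hl & s & Hs & Hp).
    destruct (small_mass_level_sound k s Hs) as [Hx _]. apply extends_init_seg in Hx.
    exists s. split; [split; [apply is_prefix_length in Hp; lia | rewrite Hx; auto]|auto]. }
  destruct (HP u0 (or_introl eq_refl)) as (s0 & Hs0 & _).
  destruct (exists_least P (ex_intro _ _ Hs0)) as (j0 & [_ Hlev] & Hmin).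
  apply (Rle_trans _ (m (init_seg x j0))); [|apply (small_mass_level_sound k _ Hlev)].
  apply (measure_sum_below m _ n); auto. intros u Hu.
  destruct (HP u Hu) as (s & Ps & Hs & Hp). split; [apply HL; auto|].
  eapply is_prefix_trans; [|exact Hp]. rewrite Hs. apply init_seg_prefix, Hmin, Ps.
Qed.

End ComputableMeasure.

Lemma decidable_not_continuously_proper : ~ continuously_proper x.
Proof.
  intros (m & Hm & [em Hem] & Hat & Hmlr).
  apply (Hmlr (small_mass_test em)); [intro k; apply small_mass_test_bound; auto|].
  intro k. destruct (Hat x ((/2) ^ S (S k))) as [n Hn]; [apply Rlt_gt, pow_lt; lra|].
  exists (init_seg x n). split; [|apply init_seg_extends].
  apply (small_mass_level_complete m); auto. lra.
Qed.

End DecidableSequence.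

Lemma count_b_app c s t : count_b c (s ++ t) = (count_b c s + count_b c t)%nat.
Proof. induction s as [|b s IH]; simpl; [|destruct (Bool.eqb b c); rewrite IH]; lia. Qed.

Lemma bernoulli_snoc r s :
  bernoulli r (s ++ [false]) = bernoulli r s * r /\
  bernoulli r (s ++ [true]) = bernoulli r s * (1 - r).
Proof.
  unfold bernoulli. rewrite !count_b_app. simpl. rewrite !Nat.add_0_r, !Nat.add_1_r. simpl.
  split; ring.
Qed.

Lemma bernoulli_measure r : 0 <= r <= 1 -> is_measure (bernoulli r).
Proof.
  intro Hr. split; [|split].
  - unfold bernoulli. simpl. ring.
  - intro s. unfold bernoulli. apply Rmult_le_pos; apply pow_le; lra.
  - intro s. destruct (bernoulli_snoc r s) as [-> ->]. ring.
Qed.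

Lemma bernoulli_half s : bernoulli (/2) s = (/2) ^ length s.
Proof.
  unfold bernoulli. replace (1 - /2) with (/2) by lra. rewrite <- pow_add. f_equal.
  induction s as [|[] s IH]; simpl; lia.
Qed.

Lemma bernoulli_half_atomless : atomless (bernoulli (/2)).
Proof.
  intros z eps Heps.
  destruct (pow_lt_1_zero (/2) ltac:(rewrite Rabs_right; lra) eps Heps) as [N HN].
  exists N. rewrite bernoulli_half, init_seg_length. specialize (HN N (le_n N)).
  rewrite Rabs_right in HN; auto. apply Rle_ge, pow_le; lra.
Qed.

Definition c_bernoulli_half := CComp c_npair [c_two; CComp c_pred [CComp c_pow2_floor [CProj 0]]].

Lemma bernoulli_half_computable : computable_measure (bernoulli (/2)).
Proof.
  exists c_bernoulli_half. intros s n. exists 2%nat, (2 ^ length s - 1)%nat. split.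
  - unfold c_bernoulli_half. eval_prog. rewrite pow2_floor_str_code. f_equal. lia.
  - pose proof (Nat.pow_nonzero 2 (length s) ltac:(lia)).
    rewrite (rat_val_even 1), bernoulli_half.
    replace (S (2 ^ length s - 1)) with (2 ^ length s)%nat by lia.
    rewrite pow_INR, pow_inv. change (INR 1) with 1. replace (INR 2) with 2 by (simpl; lra).
    rewrite Rminus_diag_eq by (unfold Rdiv; ring).
    rewrite Rabs_R0. apply pow_le; lra.
Qed.

Definition half_bits (i : nat) : bool := match i with O => true | _ => false end.

Lemma half_bits_expansion : binary_expansion (/2) half_bits.
Proof.
  assert (Hpartial : forall n, bin_partial half_bits (S n) = /2).
  { induction n; simpl in *; [|rewrite IHn]; lra. }
  intros [|n]; [simpl; lra|]. rewrite Hpartial. pose proof (pow_lt (/2) (S n)). lra.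
Qed.

Lemma extends_half_bits b t :
  extends half_bits (b :: t) <-> b = true /\ t = repeat false (length t).
Proof.
  assert (Htail : forall k n, map half_bits (seq (S k) n) = repeat false n).
  { intros k n. revert k. induction n; intro k; simpl; [|rewrite IHn]; auto. }
  rewrite extends_init_seg. unfold init_seg. simpl. rewrite Htail. split.
  - intros [=]. auto.
  - intros [-> <-]. auto.
Qed.

(* Codes of initial segments of [half_bits] are [0] and the powers [2^n], [n >= 1]. *)
Definition half_prefix_code (c : nat) : bool := (c =? 0)%nat || (pow2_floor c =? c)%nat.

Lemma half_prefix_code_spec s : half_prefix_code (str_code s) = true <-> extends half_bits s.
Proof.
  unfold half_prefix_code. rewrite orb_true_iff, !Nat.eqb_eq, pow2_floor_str_code.
  destruct s as [|[] t].
  - split; [intros _ i Hi; simpl in Hi; lia|auto].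
  - rewrite extends_half_bits, <- str_code_repeat_false. simpl.
    split; [intros [|]|intros [_ ?]]; lia.
  - rewrite extends_half_bits. simpl. pose proof (Nat.pow_nonzero 2 (length t)).
    split; [intros [|]; lia|intros [[=] _]].
Qed.

Definition c_half_prefix :=
  CComp c_add [CComp c_eqb [CProj 0; CZero]; CComp c_eqb [c_pow2_floor; CProj 0]].

Lemma eval_half_prefix s :
  eval O0 c_half_prefix [str_code s] (Nat.b2n (half_prefix_code (str_code s))).
Proof.
  unfold c_half_prefix. eval_prog. unfold half_prefix_code. rewrite pow2_floor_str_code.
  pose proof (Nat.pow_nonzero 2 (length s)).
  destruct (Nat.eqb_spec (str_code s) 0), (Nat.eqb_spec (2 ^ length s) (str_code s));
    cbn; lia.
Qed.

Theorem mainTheorem6 :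
  exists (r : R) (b : nat -> bool),
    0 <= r <= 1 /\ binary_expansion r b /\
    proper b /\ ~ continuously_proper b /\
    exists x : nat -> bool,
      MLR (oracle_of b) (bernoulli r) x /\ continuously_proper x.
Proof.
  pose proof (decidable_proper _ _ _ half_prefix_code_spec eval_half_prefix) as Hproper.
  pose proof (decidable_not_continuously_proper _ _ _ half_prefix_code_spec eval_half_prefix)
    as Hnot_cp.
  destruct (exists_random_for_oracles (bernoulli (/2))
              (fun i => match i with O => O0 | _ => oracle_of half_bits end))
    as [x Hx]; [apply bernoulli_measure; lra|].
  exists (/2), half_bits. split; [lra|]. split; [apply half_bits_expansion|].
  split; [exact Hproper|]. split; [exact Hnot_cp|].
  exists x. split; [exact (Hx 1%nat)|].
  exists (bernoulli (/2)). split; [apply bernoulli_measure; lra|].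
  split; [apply bernoulli_half_computable|].
  split; [apply bernoulli_half_atomless|exact (Hx 0%nat)].
Qed.
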